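(* Let $f_1,\dots,f_\Lambda$ be candidate models, $\mathcal L:\{f_\lambda\}_{\lambda=1}^\Lambda\to\mathbb R$ a performance metric, $U:(0,1)\to\mathbb R_+$, and fix $\delta\in(0,1)$. Suppose the pairwise comparison subroutine $\mathcal A$ satisfies: for any two models $h_1,h_2\in\{f_\lambda\}_{\lambda=1}^\Lambda$, its output $\widehat h\in\{h_1,h_2\}$ satisfies \[ \mathbb P\big(\mathcal L(\widehat h)-\min\{\mathcal L(h_1),\mathcal L(h_2)\}\le U(\delta)\big)\ge1-\delta. \] Then the output $\widehat f$ of the tournament procedure (context) run with $\mathcal A$ satisfies \[ \mathbb P\Big(\mathcal L(\widehat f)-\min_{\lambda\in[\Lambda]}\mathcal L(f_\lambda)\le2U(\delta)\Big)\ge1-\Lambda^2\delta. \]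
   Context: Tournament procedure (ATOMS): $S=\{f_1,\dots,f_\Lambda\}$; while $|S|>1$: choose a pivot $f\in S$ uniformly at random; let $S'=\{f'\in S\setminus\{f\}:\mathcal A(f,f')=f'\}$, where $\mathcal A(f,f')\in\{f,f'\}$ is the model output by $\mathcal A$ on the pair; if $S'=\emptyset$ output $f$, otherwise set $S\leftarrow S'$. If $|S|=1$, output its unique element. *)

From HB Require Import structures.
From mathcomp Require Import all_boot all_order all_algebra.
From mathcomp Require Import all_classical all_reals all_analysis.
Set Implicit Arguments. Unset Strict Implicit. Unset Printing Implicit Defensive.
Import Order.TTheory GRing.Theory Num.Theory.
Local Open Scope ring_scope.

(* Models f_1..f_Λ are indexed by 'I_Λ.
   [A w i j] is the output (an index, i or j) of the comparison subroutine on
   the pair (f_i, f_j) (pivot f_i first) at sample point w.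
   [piv w S] is the (random) pivot chosen from the current set S.
   Each iteration: pivot f, S' = {f' in S \ {f} | A(f,f') = f'};
   if S' is empty output f, otherwise S <- S'.  (When |S| = 1 the pivot is the
   unique element and S' is empty, so its unique element is output.)
   [n] is fuel; since |S| strictly decreases, fuel Λ is never exhausted when
   starting from the full set. *)
Fixpoint tournament_rec (Λ : nat) (A : 'I_Λ -> 'I_Λ -> 'I_Λ)
    (piv : {set 'I_Λ} -> 'I_Λ) (n : nat) (S : {set 'I_Λ}) : 'I_Λ :=
  match n with
  | 0 => piv S
  | n'.+1 =>
      let f := piv S in
      let S' := [set f' in S :\ f | A f f' == f'] in
      if S' == finset.set0 then f else tournament_rec A piv n' S'
  end.

Definition tournament (T : Type) (Λ : nat) (A : T -> 'I_Λ -> 'I_Λ -> 'I_Λ)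
    (piv : T -> {set 'I_Λ} -> 'I_Λ) (w : T) : 'I_Λ :=
  tournament_rec (A w) (piv w) Λ [set: 'I_Λ].

From HB Require Import structures.
From mathcomp Require Import all_boot all_order all_algebra.
From mathcomp Require Import all_classical all_reals all_analysis.
From mathcomp Require Import lra.
Import Order.TTheory GRing.Theory Num.Theory.
Local Open Scope ring_scope.

(* If all Λ² pairwise comparisons are accurate up to u = U(δ), the output is
   within 2u of every model l.  Invariant: the current set either contains l,
   or all of its elements are within 2u of l.  If the pivot f eliminates l,
   then L f <= L l + u; every survivor f' beat f, so L f' <= L f + u <= L l + 2u.  A union bound over the Λ²
   comparisons turns this into probability at least 1 - Λ²δ. *)

Section AccurateTournament.
Variables (R : realDomainType) (Λ : nat) (L : 'I_Λ -> R) (u : R).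
Variables (A : 'I_Λ -> 'I_Λ -> 'I_Λ) (piv : {set 'I_Λ} -> 'I_Λ).
Hypothesis u_ge0 : 0 <= u.
Hypothesis A_in : forall i j, A i j = i \/ A i j = j.
Hypothesis A_accurate : forall i j, L (A i j) - Num.min (L i) (L j) <= u.
Hypothesis piv_in : forall S, S != finset.set0 -> piv S \in S.

Definition survivors (S : {set 'I_Λ}) := [set f' in S :\ piv S | A (piv S) f' == f'].

Lemma compare_le_l i j : L (A i j) <= L i + u.
Proof. by have := A_accurate i j; have := ge_min (L i) (L i) (L j); rewrite lexx; lra. Qed.

Lemma compare_le_r i j : L (A i j) <= L j + u.
Proof.
by have := A_accurate i j; have := ge_min (L j) (L i) (L j); rewrite lexx orbT; lra.
Qed.

Lemma survivors_sub S : survivors S \subset S.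
Proof. by apply/fintype.subsetP => x; rewrite !inE => /andP[/andP[]]. Qed.

Lemma card_survivors {S : {set 'I_Λ}} : S != finset.set0 -> (#|survivors S| < #|S|)%N.
Proof.
move=> /piv_in pivS; rewrite [#|S|](cardsD1 (piv S)) pivS ltnS subset_leq_card //.
by apply/fintype.subsetP => x; rewrite inE => /andP[].
Qed.

Lemma survivor_le {S : {set 'I_Λ}} {x} : x \in survivors S -> L x <= L (piv S) + u.
Proof. by rewrite inE => /andP[_ /eqP <-]; apply: compare_le_l. Qed.

Section Reference.
Variable l : 'I_Λ.

Definition contains_or_near (S : {set 'I_Λ}) :=
  l \in S \/ {in S, forall x, L x <= L l + 2 * u}.

Lemma pivot_le_eliminated {S : {set 'I_Λ}} :
  l \in S -> l \notin survivors S -> L (piv S) <= L l + u.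
Proof.
move=> lS l_out; have [->|piv_l] := eqVneq (piv S) l; first by have := u_ge0; lra.
have [A_piv|A_l] := A_in (piv S) l; last first.
  by move: l_out; rewrite !inE eq_sym piv_l lS A_l eqxx.
by have := compare_le_r (piv S) l; rewrite A_piv.
Qed.

Lemma contains_or_near_survivors {S : {set 'I_Λ}} :
  contains_or_near S -> contains_or_near (survivors S).
Proof.
have [l_in|l_out] := boolP (l \in survivors S); first by left.
case=> [lS|nearS]; right=> x xS'; have := survivor_le xS'.
  by have := pivot_le_eliminated lS l_out; lra.
by have := nearS x (fintype.subsetP (survivors_sub S) x xS'); lra.
Qed.

Lemma pivot_le_no_survivors {S : {set 'I_Λ}} : S != finset.set0 ->
  contains_or_near S -> survivors S = finset.set0 -> L (piv S) <= L l + 2 * u.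
Proof.
move=> /piv_in pivS [lS|nearS] S'0; last exact: nearS.
have := pivot_le_eliminated lS; rewrite S'0 inE => /(_ isT).
by have := u_ge0; lra.
Qed.

Lemma tournament_rec_le n S : S != finset.set0 -> (#|S| <= n)%N ->
  contains_or_near S -> L (tournament_rec A piv n S) <= L l + 2 * u.
Proof.
elim: n S => [|n IH] S S0; first by rewrite leqn0 cards_eq0 (negbTE S0).
move=> cardS nearS /=; case: eqP => S'0; first exact: pivot_le_no_survivors.
apply: IH; [exact/eqP | | exact: contains_or_near_survivors].
by rewrite -ltnS (leq_trans (card_survivors S0)).
Qed.

End Reference.

Lemma tournament_rec_full_le l :
  L (tournament_rec A piv Λ [set: 'I_Λ]) - L l <= 2 * u.
Proof.
have := @tournament_rec_le l Λ [set: 'I_Λ].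
have -> : [set: 'I_Λ] != finset.set0 by apply/set0Pn; exists l; rewrite inE.
rewrite cardsT card_ord leqnn /contains_or_near inE => /(_ isT isT (or_introl isT)).
lra.
Qed.

End AccurateTournament.

Local Open Scope classical_set_scope.

Section FiniteValuedMaps.
Context {d} {T : measurableType d}.

Lemma measurable_preimage_fibers {X : finType} (g : T -> X) (Q : X -> Prop) :
  (forall x, measurable [set w | g w = x]) -> measurable [set w | Q (g w)].
Proof.
move=> mg.
have -> : [set w | Q (g w)] = \bigcup_(x in Q) [set w | g w = x].
  by apply/seteqP; split=> [w Qw|w [x Qx /= ->]//]; exists (g w).
by apply: fin_bigcup_measurable => //; exact: finite_finset.
Qed.

Lemma measurable_fibers_ffun (I X : finType) (h : T -> I -> X) :
  (forall i x, measurable [set w | h w i = x]) ->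
  forall f : {ffun I -> X}, measurable [set w | [ffun i => h w i] = f].
Proof.
move=> mh f.
have -> : [set w | [ffun i => h w i] = f] = \bigcap_(i in [set: I]) [set w | h w i = f i].
  apply/seteqP; split=> w /=; first by move=> <- i _; rewrite ffunE.
  by move=> hf; apply/ffunP => i; rewrite ffunE; exact: hf.
by apply: fin_bigcap_measurable => //; exact: finite_finset.
Qed.

Lemma measurable_fibers_pair (X Y : finType) (g1 : T -> X) (g2 : T -> Y) :
  (forall x, measurable [set w | g1 w = x]) ->
  (forall y, measurable [set w | g2 w = y]) ->
  forall p, measurable [set w | (g1 w, g2 w) = p].
Proof.
move=> mg1 mg2 [x y].
have -> : [set w | (g1 w, g2 w) = (x, y)] = [set w | g1 w = x] `&` [set w | g2 w = y].
  by apply/seteqP; split=> w /= [-> ->].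
exact: measurableI.
Qed.

Lemma measurable_tournament {Λ : nat} {A : T -> 'I_Λ -> 'I_Λ -> 'I_Λ}
    {piv : T -> {set 'I_Λ} -> 'I_Λ} :
  (forall i j k, measurable [set w | A w i j = k]) ->
  (forall S k, measurable [set w | piv w S = k]) ->
  forall Q : 'I_Λ -> Prop, measurable [set w | Q (tournament A piv w)].
Proof.
move=> mA mpiv Q.
(* The run depends on w only through the finitely many values piv w S and A w i j. *)
pose g w := ([ffun S => piv w S], [ffun i => [ffun j => A w i j]]).
pose run (p : {ffun {set 'I_Λ} -> 'I_Λ} * {ffun 'I_Λ -> {ffun 'I_Λ -> 'I_Λ}}) :=
  tournament_rec (fun i j => p.2 i j) p.1 Λ (finset.setTfor 'I_Λ).
have -> : [set w | Q (tournament A piv w)] = [set w | Q (run (g w))].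
  apply/funext => w; rewrite /run /tournament /=; congr (Q (tournament_rec _ _ _ _)).
    by apply/funext => i; apply/funext => j; rewrite !ffunE.
  by apply/funext => S; rewrite ffunE.
apply: (measurable_preimage_fibers g (fun p => Q (run p))).
apply: measurable_fibers_pair.
  exact: measurable_fibers_ffun.
by apply: measurable_fibers_ffun => i; exact: measurable_fibers_ffun.
Qed.

End FiniteValuedMaps.

Lemma measure_bigsetU_le {d} {T : measurableType d} {R : realType}
    (mu : {measure set T -> \bar R}) {I : Type} (r : seq I) (Q : pred I)
    (F : I -> set T) :
  (forall i, Q i -> measurable (F i)) ->
  (mu (\big[setU/set0]_(i <- r | Q i) F i) <= \sum_(i <- r | Q i) mu (F i))%E.
Proof.
move=> mF; pose K B (x : \bar R) := measurable B /\ (mu B <= x)%E.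
suff [] : K (\big[setU/set0]_(i <- r | Q i) F i) (\sum_(i <- r | Q i) mu (F i)) by [].
elim/big_rec2: _ => [|i B x Qi [mB le_Bx]]; first by rewrite /K measure0.
split; first exact: measurableU (mF i Qi) mB.
by apply: le_trans (measureU2 _ (mF i Qi) mB) _; exact: leeD.
Qed.

Lemma probability_ge_of_bigcap {d} {T : measurableType d} {R : realType}
    (P : probability T R) {I : finType} (E : I -> set T) (B : set T) (δ : R) :
  measurable B -> (forall i, measurable (E i)) ->
  (forall i, ((1 - δ)%:E <= P (E i))%E) ->
  (forall w, (forall i, E i w) -> B w) ->
  ((1 - #|I|%:R * δ)%:E <= P B)%E.
Proof.
move=> mB mE PE EB.
have PEC i : (P (~` E i) <= δ%:E)%E.
  rewrite probability_setC // -[δ](subKr 1) EFinB; exact: leeB.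
have sub : ~` B `<=` \big[setU/set0]_(i : I) ~` E i.
  move=> w nBw; apply: contrapT => nU; apply: nBw; apply: EB => i.
  apply: contrapT => nEi; apply: nU; rewrite big_mkcond (bigD1 i) //=.
  by left.
have PBC : (P (~` B) <= (#|I|%:R * δ)%:E)%E.
  apply: le_trans (le_measure _ _ _ sub) _; rewrite ?inE.
  - exact: measurableC.
  - by apply: bigsetU_measurable => i _; exact: measurableC.
  apply: le_trans (measure_bigsetU_le P _ _ _ (fun i _ => measurableC (mE i))) _.
  apply: le_trans (lee_sum _ (fun i _ => PEC i)) _.
  by rewrite sumEFin sumr_const mulr_natl.
by rewrite -[B]setCK probability_setC ?EFinB; [exact: leeB | exact: measurableC].
Qed.

Theorem mainTheorem11 (R : realType) (d : measure_display) (T : measurableType d)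
    (P : probability T R) (Λ : nat) (L : 'I_Λ -> R) (U : R -> R) (δ : R)
    (A : T -> 'I_Λ -> 'I_Λ -> 'I_Λ) (piv : T -> {set 'I_Λ} -> 'I_Λ) :
  (0 < Λ)%N ->
  (forall x : R, 0 < x < 1 -> 0 <= U x) ->
  0 < δ < 1 ->
  (* the comparison subroutine: measurable, outputs one of its two inputs *)
  (forall i j k, measurable [set w | A w i j = k]) ->
  (forall w i j, A w i j = i \/ A w i j = j) ->
  (forall i j, ((1 - δ)%R%:E <=
      P [set w | (L (A w i j) - Num.min (L i) (L j) <= U δ)%R])%E) ->
  (* the pivot: measurable, lies in the current set, chosen uniformly *)
  (forall (S : {set 'I_Λ}) k, measurable [set w | piv w S = k]) ->
  (forall w (S : {set 'I_Λ}), S != finset.set0 -> piv w S \in S) ->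
  (forall (S : {set 'I_Λ}) (i : 'I_Λ), i \in S -> P [set w | piv w S = i] = ((#|S|%:R)^-1)%R%:E) ->
  ((1 - (Λ ^ 2)%:R * δ)%R%:E <=
     P [set w | forall l : 'I_Λ, (L (tournament A piv w) - L l <= 2 * U δ)%R])%E.
Proof.
move=> _ U_ge0 δ01 mA A_in A_accurate mpiv piv_in _.
pose accurate (p : 'I_Λ * 'I_Λ) :=
  [set w | (L (A w p.1 p.2) - Num.min (L p.1) (L p.2) <= U δ)%R].
have -> : (Λ ^ 2)%N = #|{: 'I_Λ * 'I_Λ}| by rewrite card_prod card_ord mulnn.
apply: (probability_ge_of_bigcap P accurate).
- exact: (measurable_tournament mA mpiv (fun t => forall l, L t - L l <= 2 * U δ)).
- move=> [i j]; apply: (measurable_preimage_fibers (fun w => A w i j)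
    (fun k => L k - Num.min (L i) (L j) <= U δ)); exact: mA.
- by move=> p; exact: A_accurate.
move=> w all_accurate l; apply: tournament_rec_full_le.
- exact: U_ge0.
- exact: A_in.
- by move=> i j; exact: (all_accurate (i, j)).
- exact: piv_in.
Qed.
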